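(* Let $a, b$ be positive integers with $b>1$ and let $i \ge 3$ be an integer with $\gcd(r_b(i),a) = \gcd(r_b(i-1),a) = 1$. Then $\omega \in \operatorname{Ap}(S_a(b,i))$ if and only if either $\omega = b\, a^{(i)}_i$, or there exist $\omega' \in \operatorname{Ap}(S_a(b,i-1))$ and $u_i \in \{0,\ldots,b-1\}$ such that \[\omega = \omega' + b^{i-1}\, \mathsf{m}_{S_a(b,i-1)}(\omega') + u_i\, a^{(i)}_i.\]
   Context: For $\ell \ge 1$, $r_b(\ell) = \sum_{j=0}^{\ell-1} b^j$, and $r_b(0)=0$. For integers $m\ge 2$ and $j\ge 1$, $a^{(m)}_j := r_b(m) + a\, r_b(j-1)$, and $S_a(b,m)$ is the submonoid of $\mathbb{N}$ generated by $\{a^{(m)}_j : j\ge 1\}$; when $\gcd(r_b(m),a)=1$ it is a numerical semigroup minimally generated by $a^{(m)}_1,\ldots,a^{(m)}_m$. $\operatorname{Ap}(S) = \{\omega\in S : \omega - \operatorname{m}(S) \notin S\}$ with $\operatorname{m}(S)$ the smallest nonzero element. For $\omega' \in \operatorname{Ap}(S_a(b,m))$, $\mathsf{m}_{S_a(b,m)}(\omega')$ denotes the (unique) length of $\omega'$, i.e. the unique value of $\sum_j u_j$ over all expressions $\omega' = \sum_{j=1}^m u_j a^{(m)}_j$ with $u_j\in\mathbb{N}$ (such length is unique for elements of this Apéry set). *)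

From mathcomp Require Import all_boot.
Set Implicit Arguments. Unset Strict Implicit. Unset Printing Implicit Defensive.

Definition rb (b l : nat) : nat := \sum_(j < l) b ^ j.

(* a^{(m)}_j = r_b(m) + a r_b(j-1), meaningful for j >= 1 *)
Definition gen (a b m j : nat) : nat := rb b m + a * rb b j.-1.

(* membership in the submonoid S_a(b,m) of N generated by {a^{(m)}_j : j >= 1}:
   finite sums of generators (the empty sum gives 0). *)
Definition inS (a b m w : nat) : Prop :=
  exists s : seq nat, all (fun j => 0 < j) s /\ w = \sum_(j <- s) gen a b m j.

Definition is_mult (a b m mu : nat) : Prop :=
  [/\ 0 < mu, inS a b m mu & forall x, 0 < x -> inS a b m x -> mu <= x].

(* Apery set w.r.t. the multiplicity: w in S and w - m(S) not in S
   (w - m(S) must be a natural number, hence the condition m(S) <= w). *)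
Definition inAp (a b m w : nat) : Prop :=
  inS a b m w /\ forall mu, is_mult a b m mu -> ~ (mu <= w /\ inS a b m (w - mu)).

(* Boolean test: w has an expression w = sum_{j=1}^m u_j a^{(m)}_j with
   sum_j u_j = l.  Since every generator is >= 1 (m >= 1), all u_j <= w, so
   the search over u_j in 'I_(w.+1) is exhaustive. *)
Definition has_length (a b m w l : nat) : bool :=
  [exists u : {ffun 'I_m -> 'I_w.+1},
     (w == \sum_(k < m) u k * gen a b m k.+1) && (l == \sum_(k < m) (u k : nat))].

(* The length m_S(w): the (least, and for Apery-set elements the unique)
   length of a factorization of w. *)
Definition len (a b m w : nat) : nat :=
  find (has_length a b m w) (iota 0 w.+1).

From mathcomp Require Import all_boot zify.
Set Implicit Arguments. Unset Strict Implicit. Unset Printing Implicit Defensive.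

(* Let R = r_b(m), the multiplicity of S = S_a(b,m).  Since
   a^{(m)}_{j+1} = R + a r_b(j), the elements of S are the numbers L R + a T
   where T is a sum of L repunits r_b(j), j < m.  The greedy algorithm writes
   T with the fewest repunits: a carry into r_b(k+1) = 1 + b r_b(k) is paid for
   by the b - 1 copies of r_b(k) it absorbs.  As gcd(R, a) = 1, the Apery
   element of S congruent to a t (t < R) is therefore g(t) R + a t, where g(t)
   is the greedy length of t, and its length is g(t).  Finally
   r_b(i) = 1 + b r_b(i-1), so t < r_b(i) is either b r_b(i-1) or
   q r_b(i-1) + x with q < b and x < r_b(i-1); as g(q r_b(i-1) + x) = g(x) + q,
   the Apery element for t is obtained from the one for x in S_a(b,i-1)
   exactly as in the statement. *)

Section Repunits.
Variable b : nat.

Lemma rb0 : rb b 0 = 0.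
Proof. by rewrite /rb big_ord0. Qed.

Lemma rbS k : rb b k.+1 = 1 + b * rb b k.
Proof.
rewrite /rb big_ord_recl expn0 big_distrr; congr (_ + _).
by apply: eq_bigr => i _; rewrite expnS.
Qed.

Lemma rbSr k : rb b k.+1 = rb b k + b ^ k.
Proof. by rewrite /rb big_ord_recr. Qed.

Lemma rb_gt0 k : 0 < rb b k.+1.
Proof. by rewrite rbS. Qed.

Lemma rbD k l : rb b (k + l) = rb b k + b ^ k * rb b l.
Proof.
elim: k => [|k IH]; first by rewrite rb0 expn0 mul1n.
by rewrite addSn !rbS IH expnS mulnDr addnA mulnA.
Qed.

Lemma leq_rb k l : k <= l -> rb b k <= rb b l.
Proof. by move/subnK <-; rewrite addnC rbD leq_addr. Qed.

End Repunits.

Fixpoint greedy_len (b n t : nat) : nat :=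
  if n is n'.+1 then greedy_len b n' (t %% rb b n) + t %/ rb b n else 0.

Section GreedyLength.
Variable b : nat.
Hypothesis b_gt0 : 0 < b.

Lemma greedy_lenS n t :
  greedy_len b n.+1 t = greedy_len b n (t %% rb b n.+1) + t %/ rb b n.+1.
Proof. by []. Qed.

Lemma greedy_len0 n : greedy_len b n 0 = 0.
Proof. by elim: n => //= n IH; rewrite mod0n div0n IH. Qed.

Lemma greedy_lenDM n t c :
  greedy_len b n.+1 (t + c * rb b n.+1) = greedy_len b n.+1 t + c.
Proof. by rewrite /= [t + _]addnC modnMDl divnMDl ?rb_gt0 // addnA addnAC. Qed.

Lemma greedy_len_small n t :
  t < rb b n.+1 -> greedy_len b n.+1 t = greedy_len b n t.
Proof. by move=> t_lt /=; rewrite modn_small // divn_small // addn0. Qed.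

Lemma greedy_len_divmod n q x :
  x < rb b n.+1 -> greedy_len b n.+1 (x + q * rb b n.+1) = greedy_len b n x + q.
Proof. by move=> x_lt; rewrite greedy_lenDM greedy_len_small. Qed.

Lemma greedy_len_Mrb n c : greedy_len b n (c * rb b n) <= c.
Proof. by case: n => // n; rewrite -[_ * _]add0n greedy_lenDM greedy_len0. Qed.

Lemma divmod_rb n z : exists q x, x < rb b n.+1 /\ z = x + q * rb b n.+1.
Proof.
exists (z %/ rb b n.+1), (z %% rb b n.+1).
by rewrite ltn_pmod ?rb_gt0 // addnC -divn_eq.
Qed.

Lemma greedy_len_pred n z :
  0 < z -> greedy_len b n z.-1 <= greedy_len b n z + b.-1.
Proof.
elim: n z => [//|n IH] z.
have [q [x [x_lt ->]]] := divmod_rb n z => z_gt0.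
have [x_eq0 | x_gt0] := posnP x.
- case: q z_gt0 => [|q] z_gt0; first lia.
  have -> : (x + q.+1 * rb b n.+1).-1 = b * rb b n + q * rb b n.+1.
    by rewrite x_eq0 mulSn rbS; lia.
  rewrite !greedy_len_divmod ?x_eq0 ?greedy_len0 ?rbS //.
  have := greedy_len_Mrb n b; lia.
- have -> : (x + q * rb b n.+1).-1 = x.-1 + q * rb b n.+1 by lia.
  rewrite !greedy_len_divmod; [|done|lia].
  have := IH _ x_gt0; lia.
Qed.

Lemma greedy_len_carry n r x :
  (forall z, greedy_len b n (z + r) <= greedy_len b n z + 1) ->
  r <= rb b n -> x < rb b n.+1 -> rb b n.+1 <= x + r ->
  greedy_len b n (x + r - rb b n.+1) <= greedy_len b n x.
Proof.
case: n => [//|n] r_add r_le x_lt x_ge.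
set rho := rb b n.+1; set y := x + r - rb b n.+2.
have R_eq : rb b n.+2 = 1 + b * rho := rbS b n.+1.
(* [x + r] overflows [1 + b * rho] although [r <= rho] *)
have [z [z_gt0 x_eq]] : exists z, 0 < z /\ x = z + b.-1 * rho.
  exists (x - b.-1 * rho); split; rewrite R_eq in x_ge; [|move: x_ge]; nia.
have y_eq : y.+1 + rho = z + r by rewrite /y R_eq x_eq; nia.
have := r_add z; rewrite -y_eq -[rho]mul1n greedy_lenDM.
have := greedy_len_pred n.+1 (ltn0Sn y).
by rewrite x_eq greedy_lenDM /=; lia.
Qed.

Lemma greedy_len_add_rb n k t :
  k <= n -> greedy_len b n (t + rb b k) <= greedy_len b n t + 1.
Proof.
elim: n k t => [//|n IH] k t; rewrite leq_eqVlt => /orP [/eqP -> | k_lt].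
  by rewrite -[rb b n.+1]mul1n greedy_lenDM.
have [q [x [x_lt ->]]] := divmod_rb n t.
have r_le : rb b k <= rb b n by apply: leq_rb.
have [x_small | x_ge] := ltnP (x + rb b k) (rb b n.+1).
  rewrite addnAC !greedy_len_divmod //; have := IH k x k_lt; lia.
have -> : x + q * rb b n.+1 + rb b k = (x + rb b k - rb b n.+1) + q.+1 * rb b n.+1.
  by rewrite mulSn; lia.
rewrite !greedy_len_divmod //; last by have := leq_rb b (leqnSn n); lia.
have := greedy_len_carry (IH k ^~ k_lt) r_le x_lt x_ge; lia.
Qed.

Lemma greedy_len_addM_rb n k t c :
  k <= n -> greedy_len b n (t + c * rb b k) <= greedy_len b n t + c.
Proof.
move=> k_le; elim: c => [|c IH]; first by rewrite !addn0.
rewrite mulSn addnA addnAC; have := greedy_len_add_rb (t + c * rb b k) k_le; lia.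
Qed.

Lemma greedy_len_add_sum n m (c : 'I_m -> nat) t : m <= n.+1 ->
  greedy_len b n (t + \sum_(k < m) c k * rb b k) <= greedy_len b n t + \sum_(k < m) c k.
Proof.
move=> m_le; apply: (big_rec2 (fun s l => greedy_len b n (t + s) <= greedy_len b n t + l)).
  by rewrite !addn0.
move=> k s l _ IH; rewrite [c k * _ + s]addnC addnA.
have k_le : k <= n by rewrite -ltnS (leq_trans (ltn_ord k)).
have := greedy_len_addM_rb (t + s) (c k) k_le; lia.
Qed.

Lemma greedy_decomposition n t : exists f : nat -> nat,
  \sum_(k < n.+2) f k = greedy_len b n.+1 t /\ \sum_(k < n.+2) f k * rb b k = t.
Proof.
elim: n t => [|n IH] t.
  exists (fun k => if k == 1 then t else 0).
  have rb1 : rb b 1 = 1 by rewrite rbS rb0 muln0.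
  by rewrite /= !big_ord_recr !big_ord0 /= rb1 divn1 muln1.
have [f [f_len f_sum]] := IH (t %% rb b n.+2).
exists (fun k => if k == n.+2 then t %/ rb b n.+2 else f k).
rewrite !(big_ord_recr n.+2) greedy_lenS eqxx /=; split.
  by rewrite (eq_bigr (fun k : 'I_n.+2 => f k)) => [|k _]; rewrite ?f_len ?ltn_eqF.
rewrite (eq_bigr (fun k : 'I_n.+2 => f k * rb b k)) => [|k _]; rewrite ?ltn_eqF //.
by rewrite f_sum addnC -divn_eq.
Qed.

Lemma greedy_len_subadd n s t :
  greedy_len b n.+1 (s + t) <= greedy_len b n.+1 s + greedy_len b n.+1 t.
Proof.
have [f [<- <-]] := greedy_decomposition n t.
exact: (greedy_len_add_sum (fun k : 'I_n.+2 => f k)).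
Qed.

End GreedyLength.

Section Semigroup.
Variables a b : nat.

Lemma inS0 m : inS a b m 0.
Proof. by exists [::]; rewrite big_nil. Qed.

Lemma inS_add m x y : inS a b m x -> inS a b m y -> inS a b m (x + y).
Proof.
move=> [s [s_pos ->]] [s' [s'_pos ->]].
by exists (s ++ s'); rewrite all_cat s_pos s'_pos big_cat.
Qed.

Lemma inS_mul_gen m c j : 0 < j -> inS a b m (c * gen a b m j).
Proof.
move=> j_gt0; exists (nseq c j).
by rewrite all_nseq j_gt0 orbT big_nseq iter_addn_0 mulnC.
Qed.

Lemma inS_sum_gen m (c : 'I_m -> nat) : inS a b m (\sum_(k < m) c k * gen a b m k.+1).
Proof.
by elim/big_ind: _ => [|x y|k _]; [exact: inS0 | exact: inS_add | exact: inS_mul_gen].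
Qed.

Lemma sum_gen m (c : 'I_m -> nat) :
  \sum_(k < m) c k * gen a b m k.+1 =
  (\sum_(k < m) c k) * rb b m + a * \sum_(k < m) c k * rb b k.
Proof.
rewrite big_distrl big_distrr -big_split /=; apply: eq_bigr => k _.
by rewrite /gen mulnDr mulnCA.
Qed.

Lemma gen1 m : gen a b m 1 = rb b m.
Proof. by rewrite /gen rb0 muln0 addn0. Qed.

Lemma is_mult_rb m : is_mult a b m.+1 (rb b m.+1).
Proof.
split; first exact: rb_gt0.
  by rewrite -(gen1 m.+1) -[gen _ _ _ _]mul1n; exact: inS_mul_gen.
move=> x x_gt0 [[|j s] [_ x_eq]]; first by move: x_gt0; rewrite x_eq big_nil.
by rewrite x_eq big_cons /gen -addnA leq_addr.
Qed.

Lemma inAp_rb m w : inAp a b m.+1 w <->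
  inS a b m.+1 w /\ ~ (rb b m.+1 <= w /\ inS a b m.+1 (w - rb b m.+1)).
Proof.
split=> [[w_S w_Ap] | [w_S w_Ap]]; split=> //; first exact: w_Ap (is_mult_rb m).
move=> mu [mu_gt0 mu_S mu_min]; have [R_gt0 R_S R_min] := is_mult_rb m.
suff -> : mu = rb b m.+1 by [].
by apply/eqP; rewrite eqn_leq mu_min ?R_min.
Qed.

Hypothesis b_gt0 : 0 < b.

Lemma gen_decomp n j : 0 < j -> exists L T,
  gen a b n.+1 j = L * rb b n.+1 + a * T /\ greedy_len b n.+1 T <= L.
Proof.
elim/ltn_ind: j => j IH j_gt0; have [j_le | j_gt] := leqP j n.+2.
  exists 1, (rb b j.-1); rewrite mul1n; split=> //.
  by rewrite -[rb b _]add0n (leq_trans (greedy_len_add_rb _ _ _)) ?greedy_len0 //; lia.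
have j'_lt : j - n.+1 < j by rewrite ltn_subrL j_gt0.
have j'_gt0 : 0 < j - n.+1 by rewrite subn_gt0 ltnW.
have [L [T [gen_eq T_le]]] := IH _ j'_lt j'_gt0.
have gen_split :
    gen a b n.+1 j = gen a b n.+1 (j - n.+1) + a * b ^ (j - n.+2) * rb b n.+1.
  rewrite /gen -addnA -mulnA -mulnDr (_ : j.-1 = j - n.+2 + n.+1) ?rbD; last lia.
  by rewrite (_ : (j - n.+1).-1 = j - n.+2) //; lia.
exists (L + a * b ^ (j - n.+2)), T; rewrite gen_split gen_eq; split; [nia | lia].
Qed.

Lemma inS_decomp n w : inS a b n.+1 w -> exists L T,
  w = L * rb b n.+1 + a * T /\ greedy_len b n.+1 T <= L.
Proof.
case=> s [s_pos ->]; elim: s s_pos => [|j s IH].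
  by exists 0, 0; rewrite big_nil greedy_len0 muln0.
rewrite big_cons => /andP [j_gt0 /IH [L [T [-> T_le]]]].
have [L1 [T1 [-> T1_le]]] := gen_decomp n j_gt0.
exists (L1 + L), (T1 + T); rewrite mulnDl mulnDr addnACA; split=> //.
by rewrite (leq_trans (greedy_len_subadd _ _ _ _)) // leq_add.
Qed.

End Semigroup.

Lemma coprime_mulD_inj d a X Y t r : coprime d a -> t < d -> r < d ->
  X * d + a * t = Y * d + a * r -> t = r /\ X = Y.
Proof.
move=> co_da; wlog t_le : X Y t r / t <= r.
  move=> IH t_lt r_lt XY_eq; have [t_le | r_lt_t] := leqP t r; first exact: IH.
  by have [-> ->] := IH Y X r t (ltnW r_lt_t) r_lt t_lt (esym XY_eq).
move=> t_lt r_lt XY_eq.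
have mod_eq : a * r = a * t %[mod d] by rewrite -(modnMDl Y) -XY_eq modnMDl.
have dvd_rt : d %| r - t.
  by rewrite -(Gauss_dvdr _ co_da) mulnBr -eqn_mod_dvd ?leq_mul2l ?t_le ?orbT // mod_eq.
have t_eq : t = r by case: (posnP (r - t)) => [|/dvdn_leq/(_ dvd_rt)]; lia.
have d_gt0 : 0 < d by lia.
by subst t; split=> //; apply/eqP; rewrite -(eqn_pmul2r d_gt0) -(eqn_add2r (a * r)) XY_eq.
Qed.

(* For [t < r_b(n+2)], the element of Ap(S_a(b, n+2)) congruent to [a * t]
   modulo r_b(n+2). *)
Definition apery_elt (a b n t : nat) : nat :=
  greedy_len b n.+1 t * rb b n.+2 + a * t.

Section AperySet.
Variables a b n : nat.
Hypotheses (b_gt0 : 0 < b) (co_rb_a : coprime (rb b n.+2) a).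
Local Notation R := (rb b n.+2).
Local Notation E := (apery_elt a b n).

Lemma apery_elt_inS t : inS a b n.+2 (E t).
Proof.
have [f [f_len f_sum]] := greedy_decomposition b n t.
rewrite /apery_elt -f_len -f_sum -sum_gen.
exact: (inS_sum_gen a b (fun k : 'I_n.+2 => f k)).
Qed.

Lemma apery_elt_addM_inj t t' c c' : t < R -> t' < R ->
  E t + c * R = E t' + c' * R -> t = t' /\ c = c'.
Proof.
move=> t_lt t'_lt E_eq.
have [t_eq len_eq] : t = t' /\ greedy_len b n.+1 t + c = greedy_len b n.+1 t' + c'.
  by apply: (coprime_mulD_inj co_rb_a t_lt t'_lt); move: E_eq; rewrite /apery_elt !mulnDl; lia.
by subst t'; split=> //; lia.
Qed.

Lemma apery_elt_reduce L T : greedy_len b n.+2 T <= L -> exists t c,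
  [/\ t < R, L * R + a * T = E t + c * R
    & greedy_len b n.+1 t <= L <= greedy_len b n.+1 t + c].
Proof.
have [q [t [t_lt ->]]] := divmod_rb b n.+1 T; rewrite greedy_len_divmod // => T_le.
exists t, (L - greedy_len b n.+1 t + a * q); split=> //; first by rewrite /apery_elt; nia.
by apply/andP; split; lia.
Qed.

Lemma inS_apery_decomp w : inS a b n.+2 w ->
  exists t c, t < R /\ w = E t + c * R.
Proof.
move=> /(inS_decomp b_gt0) [L [T [-> /apery_elt_reduce [t [c [t_lt -> _]]]]]].
by exists t, c.
Qed.

Lemma inAp_apery_elt w : inAp a b n.+2 w <-> exists2 t, t < R & w = E t.
Proof.
rewrite inAp_rb; split.
  move=> [/inS_apery_decomp [t [c [t_lt w_eq]]] w_Ap]; exists t => //.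
  case: c w_eq => [|c] w_eq; first by rewrite w_eq addn0.
  case: w_Ap; rewrite w_eq mulSn addnCA addKn; split; first exact: leq_addr.
  by apply: inS_add; [exact: apery_elt_inS | rewrite -(gen1 a); exact: inS_mul_gen].
move=> [t t_lt ->]; split=> [|[R_le /inS_apery_decomp [t' [c [t'_lt E_eq]]]]].
  exact: apery_elt_inS.
have E_eq' : E t + 0 * R = E t' + c.+1 * R.
  by rewrite mulSn addnCA -E_eq subnKC ?addn0.
by have [_] := apery_elt_addM_inj t_lt t'_lt E_eq'.
Qed.

Lemma has_length_apery_elt t l : t < R ->
  has_length a b n.+2 (E t) l = (l == greedy_len b n.+1 t).
Proof.
move=> t_lt; apply/existsP/eqP => [[u /andP [/eqP E_eq /eqP l_eq]] | ->].
  rewrite (sum_gen a b (fun k => (u k : nat))) -l_eq in E_eq.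
  have := greedy_len_add_sum b_gt0 (fun k => (u k : nat)) 0 (leqnSn n.+2).
  rewrite !add0n greedy_len0 -l_eq => /apery_elt_reduce [t' [c [t'_lt E_eq' l_le]]].
  rewrite -E_eq -[E t]addn0 -(mul0n R) in E_eq'.
  by have [-> c_eq] := apery_elt_addM_inj t_lt t'_lt E_eq'; move: l_le; rewrite -c_eq; lia.
have [f [f_len f_sum]] := greedy_decomposition b n t.
have f_le (k : 'I_n.+2) : f k < (E t).+1.
  rewrite ltnS (leq_trans _ (leq_addr _ _)) // (leq_trans _ (leq_pmulr _ (rb_gt0 b n.+1))) //.
  by rewrite -f_len (bigD1 k) //= leq_addr.
pose u : {ffun 'I_n.+2 -> 'I_(E t).+1} := [ffun k : 'I_n.+2 => inord (f k)].
have u_eq k : (u k : nat) = f k by rewrite ffunE inordK ?f_le.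
exists u; rewrite (eq_bigr _ (fun k _ => u_eq k)).
rewrite (eq_bigr (fun k : 'I_n.+2 => f k * gen a b n.+2 k.+1)) => [|k _]; last by rewrite u_eq.
by rewrite (sum_gen a b (fun k => f k)) f_len f_sum !eqxx.
Qed.

Lemma len_apery_elt t : t < R -> len a b n.+2 (E t) = greedy_len b n.+1 t.
Proof.
move=> t_lt; rewrite /len (eq_find (fun l => has_length_apery_elt l t_lt)).
have len_lt : greedy_len b n.+1 t < size (iota 0 (E t).+1).
  by rewrite size_iota ltnS (leq_trans (leq_pmulr _ (rb_gt0 b n.+1))) ?leq_addr.
have := index_uniq 0 len_lt (iota_uniq 0 _).
by rewrite nth_iota // -(size_iota 0 (E t).+1).
Qed.

End AperySet.

Lemma apery_elt_recursion a b n q x : x < rb b n.+2 ->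
  apery_elt a b n.+1 (x + q * rb b n.+2) =
  apery_elt a b n x + b ^ n.+2 * greedy_len b n.+1 x + q * gen a b n.+3 n.+3.
Proof.
move=> x_lt; rewrite /apery_elt greedy_len_divmod // /gen -[n.+3.-1]/n.+2.
by rewrite (rbSr b n.+2); nia.
Qed.

Theorem corollary19 (a b i : nat) :
  0 < a -> 1 < b -> 3 <= i ->
  coprime (rb b i) a -> coprime (rb b i.-1) a ->
  forall w : nat,
    inAp a b i w <->
    (w = b * gen a b i i \/
     exists w' ui : nat,
       [/\ inAp a b i.-1 w', ui < b &
           w = w' + b ^ i.-1 * len a b i.-1 w' + ui * gen a b i i]).
Proof.
case: i => [|[|[|n]]] //= _ b_gt1 _ co_i co_i1 w.
have b_gt0 : 0 < b := ltnW b_gt1.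
have R_eq : rb b n.+3 = (b * rb b n.+2).+1 by rewrite rbS add1n.
rewrite (inAp_apery_elt b_gt0 co_i); split.
  move=> [t t_lt ->]; have [q [x [x_lt t_eq]]] := divmod_rb b n.+1 t.
  rewrite t_eq apery_elt_recursion //; have [q_lt | q_ge] := ltnP q b.
    right; exists (apery_elt a b n x), q; split=> //.
      by apply/(inAp_apery_elt b_gt0 co_i1); exists x.
    by rewrite len_apery_elt.
  have [-> ->] : x = 0 /\ q = b by move: t_lt; rewrite t_eq R_eq; nia.
  by left; rewrite /apery_elt greedy_len0 !muln0.
case=> [-> | [w' [ui [w'_Ap ui_lt ->]]]].
  exists (0 + b * rb b n.+2); first by rewrite R_eq add0n.
  by rewrite apery_elt_recursion ?rb_gt0 // /apery_elt greedy_len0 !muln0.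
have [x x_lt ->] := (inAp_apery_elt b_gt0 co_i1 w').1 w'_Ap.
exists (x + ui * rb b n.+2); first by rewrite R_eq; nia.
by rewrite apery_elt_recursion // len_apery_elt.
Qed.
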